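(* Let $q$ be a prime power and let $n\ge 3$ be an odd integer. Then: (1) for each $d\in D_n$, there are exactly $\phi(d)/n$ SCRIM polynomials over $\mathbb{F}_{q^2}$ of degree $n$ and order $d$; (2) the number of SCRIM polynomials over $\mathbb{F}_{q^2}$ of degree $n$ is $\frac{1}{n}\sum_{d\in D_n}\phi(d)$.
   Context: $\phi$ is Euler's totient function. $D_n$ denotes the set of all positive divisors of $q^n+1$ that do not divide $q^k+1$ for any integer $0\le k<n$. For $f(x)\in\mathbb{F}_{q^2}[x]$ of degree $m$ with $f(0)\neq0$, the reciprocal is $f^*(x)=x^m f(0)^{-1}f(1/x)$, the conjugate of $g(x)=\sum g_ix^i$ is $\overline{g(x)}=\sum g_i^q x^i$, and the conjugate-reciprocal is $f^\dagger(x)=\overline{f^*(x)}$. A polynomial $f$ with $f(0)\ne 0$ is SCRIM if $f=f^\dagger$ and $f$ is irreducible and monic. The order of $f$ is the smallest positive integer $s$ such that $f(x)$ divides $x^s-1$. *)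

From HB Require Import structures.
From mathcomp Require Import all_boot all_order all_algebra all_field.
Set Implicit Arguments. Unset Strict Implicit. Unset Printing Implicit Defensive.
Import Order.TTheory GRing.Theory.
Local Open Scope ring_scope.

Definition prime_power (q : nat) : Prop :=
  exists p k : nat, [/\ prime p, (0 < k)%N & q = (p ^ k)%N].

Definition inD (q n d : nat) : bool :=
  (d %| q ^ n + 1)%N && [forall k : 'I_n, ~~ (d %| q ^ k + 1)%N].

Section Defs.
Variable F : fieldType.

(* reciprocal f^*(x) = x^m f(0)^{-1} f(1/x), m = deg f = size f - 1:
   its i-th coefficient is f(0)^{-1} f_{m-i} *)
Definition recip (f : {poly F}) : {poly F} :=
  (f`_0)^-1 *: \poly_(i < size f) f`_(size f - 1 - i).

Definition conjp (q : nat) (g : {poly F}) : {poly F} :=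
  map_poly (fun a => a ^+ q) g.

Definition conj_recip (q : nat) (f : {poly F}) : {poly F} := conjp q (recip f).

Definition SCRIM (q : nat) (f : {poly F}) : Prop :=
  [/\ f`_0 != 0, f = conj_recip q f, irreducible_poly f & f \is monic].

Definition poly_order (f : {poly F}) (s : nat) : Prop :=
  [/\ (0 < s)%N, f %| 'X^s - 1 &
      forall t : nat, (0 < t)%N -> (t < s)%N -> ~~ (f %| 'X^t - 1)].

Definition has_card (P : {poly F} -> Prop) (N : nat) : Prop :=
  exists s : seq {poly F}, [/\ uniq s, forall f, f \in s <-> P f & size s = N].
End Defs.

(* Work in an algebraic closure K of F = F_{q^2}, in which F is the fixed field
   of the Frobenius x |-> x^(q^2). A monic irreducible f of degree n over F is the
   product of the X - x^(q^(2j)), j < n, over the Frobenius orbit of any of its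
   roots x, an orbit with exactly n elements, and the order of f is the
   multiplicative order of x. The roots of f^dagger are the x^(-q), so f is
   self-conjugate-reciprocal iff x^(-q) lies in the orbit of x, which for odd n
   means x^(q^n) = x^(-1), i.e. x^(q^n+1) = 1. For x of order d dividing q^n+1,
   the orbit has n elements exactly when d is in D_n: a proper period e of x
   divides n with odd cofactor, whence x^(q^e) = x^(-1) and d | q^e+1. Hence the
   SCRIM polynomials of degree n and order d correspond to the Frobenius orbits
   of the phi(d) primitive d-th roots of unity, n roots per orbit. *)

From HB Require Import structures.
From mathcomp Require Import all_boot all_order all_algebra all_field cyclic.
From mathcomp Require Import zify.
Import Order.TTheory GRing.Theory Num.Theory.
Local Open Scope ring_scope.
Set Implicit Arguments. Unset Strict Implicit. Unset Printing Implicit Defensive.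

Lemma has_card_eq (R : fieldType) (P Q : {poly R} -> Prop) N :
  (forall f, P f <-> Q f) -> has_card P N -> has_card Q N.
Proof.
by move=> PQ [s [s_uniq mem_s size_s]]; exists s; split=> // f; rewrite mem_s.
Qed.

Lemma undup_map_fibers (T U : eqType) (s : seq T) (g : T -> U) (c : nat) :
  uniq s -> (forall x, x \in s -> count (fun y => g y == g x) s = c) ->
  (size (undup (map g s)) * c = size s)%N.
Proof.
move=> s_uniq fiber_c; set t := undup (map g s).
have split_s : size s = (\sum_(u <- t) count (fun y => g y == u) s)%N.
  under eq_bigr do rewrite -sum1_count big_mkcond.
  rewrite -exchange_big -sum1_size big_seq [RHS]big_seq; apply: eq_bigr => x xs.
  rewrite -big_mkcond sum1_count (eq_count (a2 := pred1 (g x))) => [|u /=].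
    by rewrite count_uniq_mem ?undup_uniq // mem_undup map_f.
  by rewrite eq_sym.
rewrite split_s big_seq (eq_bigr (fun=> c)) => [|u].
  by rewrite -big_seq big_const_seq count_predT iter_addn_0 mulnC.
by rewrite mem_undup => /mapP[x xs ->]; apply: fiber_c.
Qed.

Lemma horner_recip (R : fieldType) (f : {poly R}) x : x != 0 ->
  (recip f).[x] = (f`_0)^-1 * (x ^+ (size f).-1 * f.[x^-1]).
Proof.
move=> x_neq0; rewrite /recip hornerZ horner_poly horner_coef; congr (_ * _).
rewrite mulr_sumr (reindex_inj rev_ord_inj) /=; apply: eq_bigr => -[i /= i_lt] _.
(* [set] merges two differently elaborated copies of [size f] for [lia]. *)
move: i_lt; set m := size f => i_lt.
rewrite (_ : (m - 1 - (m - i.+1) = i)%N); last by lia.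
rewrite mulrCA exprVn (_ : (m.-1 = (m - i.+1) + i)%N); last by lia.
by rewrite exprD mulfK // expf_neq0.
Qed.

Lemma map_recip (R S : fieldType) (phi : {rmorphism R -> S}) (f : {poly R}) :
  map_poly phi (recip f) = recip (map_poly phi f).
Proof.
rewrite /recip map_polyZ size_map_poly coef_map fmorphV; congr (_ *: _).
apply/polyP => i; rewrite coef_map coef_poly [RHS]coef_poly coef_map.
by case: ltnP => // _; rewrite raddf0.
Qed.

Lemma recip_monic_size (R : fieldType) (f : {poly R}) : f`_0 != 0 ->
  recip f \is monic /\ size (recip f) = size f.
Proof.
move=> f0_neq0; rewrite /recip; set P := \poly_(i < size f) _.
have f_gt0 : (0 < size f)%N.
  by rewrite size_poly_gt0; apply: contraNneq f0_neq0 => ->; rewrite coef0.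
have size_P : size P = size f by rewrite size_poly_eq // subn1 subnn.
rewrite size_scale ?invr_eq0 // monicE lead_coefZ lead_coefE size_P.
by rewrite coef_poly ltn_predL f_gt0 subn1 subnn mulVf.
Qed.

Lemma fin_fixed_codom (F : finFieldType) (K : fieldType) (phi : {rmorphism F -> K}) y :
  y ^+ #|F| = y -> y \in codom phi.
Proof.
move=> y_fixed; apply: contraT => y_notin.
pose P : {poly K} := 'X^#|F| - 'X.
have size_P : size P = #|F|.+1.
  by rewrite size_polyDl ?size_polyXn // size_polyN size_polyX ltnS card_finNzRing_gt1.
have := @max_poly_roots _ P (y :: codom phi).
rewrite /= size_codom size_P ltnn; apply.
- by rewrite -size_poly_eq0 size_P.
- rewrite /root !hornerE y_fixed subrr eqxx /=.
  by apply/allP => _ /codomP[b ->]; rewrite /root !hornerE -rmorphXn expf_card subrr.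
- by rewrite /= y_notin codomE map_inj_uniq ?enum_uniq //; apply: fmorph_inj.
Qed.

Lemma closed_prim_root_exists (K : closedFieldType) d :
  d%:R != 0 :> K -> exists w : K, d.-primitive_root w.
Proof.
move=> d_neq0; have d_gt0 : (0 < d)%N by case: d d_neq0; rewrite ?eqxx.
have [rs def_rs] := closed_field_poly_normal ('X^d - 1 : {poly K}).
rewrite (monicP (monicXnsubC 1 d_gt0)) scale1r in def_rs.
have rs_uniq : uniq rs.
  by rewrite -separable_prod_XsubC -def_rs separable_Xn_sub_1.
have /hasP[w _ prim_w] : has d.-primitive_root rs.
  apply: has_prim_root => //.
    apply/allP => z z_rs; have : root ('X^d - 1) z by rewrite def_rs root_prod_XsubC.
    by rewrite unity_rootE /root !hornerE subr_eq0.
  by have := size_XnsubC (1 : K) d_gt0; rewrite polyC1 def_rs size_prod_XsubC => -[->].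
by exists w.
Qed.

Lemma prim_roots_seq (R : fieldType) d (w : R) : d.-primitive_root w ->
  exists2 s : seq R, uniq s &
    size s = totient d /\ forall y, (y \in s) = d.-primitive_root y.
Proof.
move=> prim_w; set idx := [seq i <- iota 0 d | coprime i d].
exists [seq w ^+ i | i <- idx]; last split.
- rewrite map_inj_in_uniq ?filter_uniq ?iota_uniq // => i j.
  rewrite !mem_filter !mem_iota /= => /andP[_ i_lt] /andP[_ j_lt] /eqP.
  by rewrite (eq_prim_root_expr prim_w) !modn_small // => /eqP.
- rewrite size_map size_filter -sum1_count big_mkcond totient_count_coprime.
  rewrite /index_iota subn0; apply: eq_bigr => i _.
  by rewrite coprime_sym; case: coprime.
move=> y; apply/mapP/idP => [[i] | prim_y].
  by rewrite mem_filter => /andP[coprime_id _] ->; rewrite prim_root_exp_coprime.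
have [i def_y] := prim_rootP prim_w (prim_expr_order prim_y).
exists (val i); last exact: def_y.
rewrite mem_filter mem_iota ltn_ord -(prim_root_exp_coprime _ prim_w) -def_y.
by rewrite prim_y.
Qed.

Lemma prim_root_order_inj (R : idomainType) d e (x : R) :
  d.-primitive_root x -> e.-primitive_root x -> d = e.
Proof.
move=> prim_d prim_e; apply/eqP; rewrite eqn_dvd.
rewrite (prim_order_dvd prim_d) (prim_order_dvd prim_e).
by rewrite (prim_expr_order prim_d) (prim_expr_order prim_e) eqxx.
Qed.

Lemma closed_prim_roots_seq (K : closedFieldType) (ds : seq nat) :
  uniq ds -> all (fun d => d%:R != 0 :> K) ds ->
  exists2 s : seq K, uniq s & (size s = \sum_(d <- ds) totient d)%N /\
    forall x, (x \in s) = has (fun d => d.-primitive_root x) ds.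
Proof.
elim: ds => [|d ds IHds] /=; first by exists [::]; rewrite ?big_nil.
case/andP=> d_notin ds_uniq /andP[d_neq0 ds_neq0].
have [w prim_w] := closed_prim_root_exists d_neq0.
have [s1 s1_uniq [size_s1 mem_s1]] := prim_roots_seq prim_w.
have [s2 s2_uniq [size_s2 mem_s2]] := IHds ds_uniq ds_neq0.
exists (s1 ++ s2); last split.
- rewrite cat_uniq s1_uniq s2_uniq andbT; apply/hasPn => x.
  rewrite mem_s2 => /hasP[e e_ds prim_e]; rewrite mem_s1.
  by apply: contraL e_ds => /prim_root_order_inj/(_ prim_e) <-.
- by rewrite size_cat big_cons size_s1 size_s2.
by move=> x; rewrite mem_cat mem_s1 mem_s2.
Qed.

Lemma coprime_dvdn_expn_add1 m n d : (0 < n)%N -> (d %| m ^ n + 1)%N -> coprime m d.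
Proof.
move=> n_gt0 d_dvd; apply: coprime_dvdr d_dvd _.
by rewrite -(prednK n_gt0) expnS /coprime mulnC gcdnMDl gcdn1.
Qed.

Section FrobeniusOrbits.
Variables (F : finFieldType) (K : closedFieldType) (io : {rmorphism F -> K}).
Variables (p k : nat).
Hypotheses (p_pr : prime p) (k_gt0 : (0 < k)%N) (cardF : #|F| = ((p ^ k) ^ 2)%N).
Local Notation q := (p ^ k)%N.

Lemma pcharF : p \in [pchar F].
Proof. by apply: (card_finPcharP (n := (k * 2)%N)); rewrite // cardF expnM. Qed.

Lemma pnat_pchar_qX (R : nzRingType) a : p \in [pchar R] -> [pchar R].-nat (q ^ a)%N.
Proof.
move=> pcharR; rewrite -expnM (eq_pnat _ (pcharf_eq pcharR)) pnatX pnatE //.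
by rewrite [p \in _]inE eqxx.
Qed.

Definition frob a (x : K) := x ^+ (q ^ a)%N.

Lemma frob_is_nmod_morphism a : nmod_morphism (frob a).
Proof.
have pcharK_qX := pnat_pchar_qX a (rmorph_pchar io pcharF).
split=> [|x y]; last exact: exprDn_pchar.
by case/andP: pcharK_qX => qX_gt0 _; rewrite /frob expr0n eqn0Ngt qX_gt0.
Qed.

Lemma frob_is_monoid_morphism a : monoid_morphism (frob a).
Proof. by split=> [|x y]; rewrite /frob ?expr1n ?exprMn. Qed.

HB.instance Definition _ a := GRing.isNmodMorphism.Build K K (frob a)
  (frob_is_nmod_morphism a).
HB.instance Definition _ a := GRing.isMonoidMorphism.Build K K (frob a)
  (frob_is_monoid_morphism a).

Lemma frobE a x : frob a x = x ^+ (q ^ a)%N. Proof. by []. Qed.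

Lemma frobD a b x : frob (a + b) x = frob b (frob a x).
Proof. by rewrite !frobE expnD exprM. Qed.

Lemma frobC a b x : frob a (frob b x) = frob b (frob a x).
Proof. by rewrite -!frobD addnC. Qed.

Lemma frob0 x : frob 0 x = x.
Proof. by rewrite frobE expn0 expr1. Qed.

Lemma frob2_io c : frob 2 (io c) = io c.
Proof. by rewrite frobE -rmorphXn -cardF expf_card. Qed.

Lemma frob_mul_fixed c t x : frob c x = x -> frob (c * t) x = x.
Proof.
move=> fix_x; elim: t => [|t IHt]; first by rewrite muln0 frob0.
by rewrite mulnS frobD fix_x IHt.
Qed.

Lemma frob_odd_mul a t x : frob (2 * a) x = x -> odd t -> frob (a * t) x = frob a x.
Proof.
move=> fix_x odd_t; rewrite -[t]odd_double_half odd_t add1n -muln2.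
rewrite (_ : (a * (t./2 * 2).+1 = 2 * a * t./2 + a)%N); last by lia.
by rewrite frobD frob_mul_fixed.
Qed.

Lemma frob_inv a x : frob a x^-1 = (frob a x)^-1.
Proof. exact: fmorphV. Qed.

Lemma frob_double_inv a x : frob a x = x^-1 -> frob (2 * a) x = x.
Proof. by move=> inv_x; rewrite mul2n -addnn frobD inv_x frob_inv inv_x invrK. Qed.

Lemma unity_root_frob_inv a x : x ^+ (q ^ a + 1) = 1 <-> x != 0 /\ frob a x = x^-1.
Proof.
rewrite frobE exprD expr1; split=> [x_root | [x_neq0 ->]]; last exact: mulVf.
have x_neq0 : x != 0.
  by apply: contra_eq_neq x_root => ->; rewrite mulr0 eq_sym oner_neq0.
by split=> //; rewrite -[_ ^+ _]mulr1 -(mulfV x_neq0) mulrA x_root mul1r.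
Qed.

Lemma frob_sqr_eq1 a x : x ^+ 2 = 1 -> frob a x = x.
Proof. by move/eqP; rewrite sqrf_eq1 => /orP[]/eqP->; rewrite ?rmorph1 ?rmorphN1. Qed.

(* Periods and orbits are taken under the Frobenius [frob 2] of F = F_{q^2},
   whose j-th iterate is [frob (2 * j)]. *)
Definition frob_period e x :=
  [/\ (0 < e)%N, frob (2 * e) x = x & forall a, frob (2 * a) x = x -> (e %| a)%N].

Lemma frob_period_exists e0 x : (0 < e0)%N -> frob (2 * e0) x = x ->
  exists e, frob_period e x.
Proof.
move=> e0_gt0 fix_x.
have ex_e : exists e, (0 < e)%N && (frob (2 * e) x == x).
  by exists e0; rewrite e0_gt0 fix_x eqxx.
case: (ex_minnP ex_e) => e /andP[e_gt0 /eqP fix_e] min_e; exists e; split=> // a fix_a.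
have fix_mod : frob (2 * (a %% e)) x = x.
  move: fix_a; rewrite {1}(divn_eq a e) mulnDr frobD.
  by rewrite (mulnC (a %/ e)%N) mulnA (frob_mul_fixed _ fix_e).
apply/negPn/negP; rewrite /dvdn -lt0n => mod_gt0.
by have := min_e (a %% e)%N; rewrite mod_gt0 fix_mod eqxx leqNgt ltn_mod e_gt0 => /(_ isT).
Qed.

Lemma frob_period_inv e J x : frob_period e x -> odd J -> frob J x = x^-1 ->
  frob e x = x^-1.
Proof.
case=> _ fix_e dvd_e odd_J inv_x.
have /dvdnP[t def_J] := dvd_e _ (frob_double_inv inv_x).
have odd_t : odd t by move: odd_J; rewrite def_J oddM => /andP[].
by rewrite -(frob_odd_mul fix_e odd_t) mulnC -def_J.
Qed.

Lemma frob_eq_fixed i j x : (i <= j)%N -> frob (2 * i) x = frob (2 * j) x ->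
  frob (2 * (j - i)) x = x.
Proof.
move=> le_ij eq_ij; apply: (fmorph_inj (frob (2 * i))) => /=.
by rewrite -frobD -mulnDr subnK // eq_ij.
Qed.

Definition frob_orbit e x := [seq frob (2 * j) x | j <- iota 0 e].

Lemma frob_orbit_uniq e x : frob_period e x -> uniq (frob_orbit e x).
Proof.
case=> _ _ dvd_e; rewrite map_inj_in_uniq ?iota_uniq // => i j.
rewrite !mem_iota !add0n => i_lt j_lt.
wlog le_ij : i j i_lt j_lt / (i <= j)%N.
  move=> wlog_ij eq_ij; case: (leqP i j) => [|/ltnW] le; first exact: wlog_ij.
  by apply/esym/wlog_ij => //; apply/esym.
move=> eq_ij.
have /dvd_e := frob_eq_fixed le_ij eq_ij.
by case: (posnP (j - i)) => [|/dvdn_leq le_e /le_e]; lia.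
Qed.

Lemma prim_root_frob_orbit d e x y : coprime q d -> d.-primitive_root x ->
  y \in frob_orbit e x -> d.-primitive_root y.
Proof.
move=> coprime_qd prim_x /mapP[j _ ->].
by rewrite frobE (prim_root_exp_coprime _ prim_x) coprimeXl.
Qed.

Definition orbit_poly e x : {poly K} := \prod_(0 <= j < e) ('X - (frob (2 * j) x)%:P).

Lemma root_orbit_poly e x y : root (orbit_poly e x) y = (y \in frob_orbit e x).
Proof.
rewrite /orbit_poly -(big_map (fun j => frob (2 * j) x) xpredT (fun y => 'X - y%:P)).
by rewrite root_prod_XsubC /index_iota subn0.
Qed.

Lemma size_orbit_poly e x : size (orbit_poly e x) = e.+1.
Proof. by rewrite size_prod_XsubC size_iota subn0. Qed.

Lemma orbit_poly_monic e x : orbit_poly e x \is monic.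
Proof. exact: monic_prod_XsubC. Qed.

Lemma map_orbit_poly_frob2 e x : frob (2 * e) x = x ->
  map_poly (frob 2) (orbit_poly e x) = orbit_poly e x.
Proof.
rewrite rmorph_prod; under eq_bigr do rewrite /= map_polyXsubC /= -frobD -mulnSr.
case: e => [|e] fix_x; rewrite /orbit_poly; first by rewrite !big_geq.
by rewrite big_nat_recr // [RHS]big_nat_recl //= fix_x mulrC frob0.
Qed.

Definition preim (y : K) : F := odflt 0 [pick b | io b == y].

Lemma preimK y : frob 2 y = y -> io (preim y) = y.
Proof.
move=> fix_y; have /codomP[b ->] : y \in codom io.
  by apply: fin_fixed_codom; rewrite cardF.
by rewrite /preim; case: pickP => [c /eqP // | /(_ b)]; rewrite eqxx.
Qed.

Definition orbit_minpoly e x : {poly F} :=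
  \poly_(i < e.+1) preim (orbit_poly e x)`_i.

Lemma map_orbit_minpoly e x : frob (2 * e) x = x ->
  map_poly io (orbit_minpoly e x) = orbit_poly e x.
Proof.
move=> fix_x; apply/polyP => i; rewrite coef_map coef_poly.
case: ltnP => [_ | le_e_i]; last by rewrite raddf0 nth_default ?size_orbit_poly.
by apply: preimK; rewrite -coef_map map_orbit_poly_frob2.
Qed.

Lemma orbit_minpoly_monic e x : frob (2 * e) x = x -> orbit_minpoly e x \is monic.
Proof.
by move=> fix_x; rewrite -(map_monic io) map_orbit_minpoly ?orbit_poly_monic.
Qed.

Lemma size_orbit_minpoly e x : frob (2 * e) x = x -> size (orbit_minpoly e x) = e.+1.
Proof.
by move=> fix_x; rewrite -(size_map_poly io) map_orbit_minpoly ?size_orbit_poly.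
Qed.

Lemma root_map_frob2 (h : {poly F}) y :
  root (map_poly io h) y -> root (map_poly io h) (frob 2 y).
Proof.
have fix_h : map_poly (frob 2) (map_poly io h) = map_poly io h.
  by apply/polyP => i; rewrite !coef_map /= frob2_io.
by rewrite /root => /eqP root_y; rewrite -fix_h horner_map root_y raddf0.
Qed.

Lemma root_map_frob2X (h : {poly F}) j y :
  root (map_poly io h) y -> root (map_poly io h) (frob (2 * j) y).
Proof.
move=> root_y; elim: j => [|j IHj]; first by rewrite frob0.
by rewrite mulnS frobD frobC root_map_frob2.
Qed.

Lemma root_map_frob_orbit (h : {poly F}) e x y :
  root (map_poly io h) x -> y \in frob_orbit e x -> root (map_poly io h) y.
Proof. by move=> root_x /mapP[j _ ->]; apply: root_map_frob2X. Qed.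

Lemma root_orbit_poly_self e x : (0 < e)%N -> root (orbit_poly e x) x.
Proof.
by move=> e_gt0; rewrite root_orbit_poly; apply/mapP; exists 0%N; rewrite ?mem_iota.
Qed.

Section MinimalPolynomial.
Variables (e : nat) (x : K).
Hypothesis period_x : frob_period e x.

Let e_gt0 : (0 < e)%N. Proof. by case: period_x. Qed.
Let fix_x : frob (2 * e) x = x. Proof. by case: period_x. Qed.

Lemma dvdp_orbit_minpoly (h : {poly F}) :
  (orbit_minpoly e x %| h) = root (map_poly io h) x.
Proof.
rewrite -(dvdp_map io) map_orbit_minpoly //; apply/idP/idP => [dvd_h | root_x].
  exact: root_dvdp dvd_h (root_orbit_poly_self x e_gt0).
rewrite /orbit_poly -(big_map (fun j => frob (2 * j) x) xpredT (fun y => 'X - y%:P)).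
apply: uniq_roots_dvdp; last by rewrite uniq_rootsE /index_iota subn0 frob_orbit_uniq.
by apply/allP => y; rewrite /index_iota subn0 => /(root_map_frob_orbit root_x).
Qed.

Lemma orbit_minpoly_irr : irreducible_poly (orbit_minpoly e x).
Proof.
split=> [|g size_g g_dvd]; first by rewrite size_orbit_minpoly.
have g_neq0 : g != 0.
  by apply: contraTneq g_dvd => ->; rewrite dvd0p -size_poly_eq0 size_orbit_minpoly.
have /closed_rootP[y root_y] : size (map_poly io g) != 1%N by rewrite size_map_poly.
have : root (orbit_poly e x) y.
  by rewrite -map_orbit_minpoly //; apply: root_dvdp root_y; rewrite dvdp_map.
rewrite root_orbit_poly => /mapP[j]; rewrite mem_iota add0n => j_lt def_y.
have root_x : root (map_poly io g) x.
  have := root_map_frob2X (e - j) root_y.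
  by rewrite def_y -frobD -mulnDr subnKC ?fix_x // ltnW.
by rewrite /eqp g_dvd dvdp_orbit_minpoly.
Qed.

Lemma orbit_minpoly_dvd_Xn_sub1 t : (orbit_minpoly e x %| 'X^t - 1) = (x ^+ t == 1).
Proof.
by rewrite dvdp_orbit_minpoly rmorphB /= map_polyXn rmorph1 rootE !hornerE subr_eq0.
Qed.

Lemma poly_order_orbit_minpoly d :
  poly_order (orbit_minpoly e x) d <-> d.-primitive_root x.
Proof.
split=> [[d_gt0 dvd_d min_d] | prim_x].
  rewrite orbit_minpoly_dvd_Xn_sub1 in dvd_d.
  have [m prim_m m_dvd] := prim_order_exists d_gt0 (eqP dvd_d).
  case: (ltngtP m d) => [lt_md | lt_dm | <-] //.
    have := min_d m (prim_order_gt0 prim_m) lt_md.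
    by rewrite orbit_minpoly_dvd_Xn_sub1 (prim_expr_order prim_m) eqxx.
  by move: (dvdn_leq d_gt0 m_dvd); rewrite leqNgt lt_dm.
split; first exact: prim_order_gt0 prim_x.
  by rewrite orbit_minpoly_dvd_Xn_sub1 prim_expr_order.
move=> t t_gt0 lt_td; rewrite orbit_minpoly_dvd_Xn_sub1 -(prim_order_dvd prim_x).
by apply/negP => /(dvdn_leq t_gt0); rewrite leqNgt lt_td.
Qed.

End MinimalPolynomial.

Lemma orbit_minpoly_eq e x y : frob_period e x -> frob_period e y ->
  (orbit_minpoly e y == orbit_minpoly e x) = (y \in frob_orbit e x).
Proof.
move=> period_x period_y; have [e_gt0 fix_x _] := period_x.
have [_ fix_y _] := period_y; apply/eqP/idP => [eq_xy | y_orbit].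
  rewrite -root_orbit_poly -map_orbit_minpoly // -eq_xy.
  by rewrite map_orbit_minpoly ?root_orbit_poly_self.
apply/eqP; rewrite -eqp_monic ?orbit_minpoly_monic // -dvdp_size_eqp.
  by rewrite !size_orbit_minpoly.
rewrite dvdp_orbit_minpoly //; apply: root_map_frob_orbit y_orbit.
by rewrite map_orbit_minpoly ?root_orbit_poly_self.
Qed.

Lemma count_orbit_minpoly_eq e s x : uniq s -> (forall y, y \in s -> frob_period e y) ->
  {subset frob_orbit e x <= s} -> x \in s ->
  count (fun y => orbit_minpoly e y == orbit_minpoly e x) s = e.
Proof.
move=> s_uniq s_period orbit_s x_s; have period_x := s_period x x_s.
rewrite -size_filter (@perm_size _ _ (frob_orbit e x)) ?size_map ?size_iota //.
apply: uniq_perm; rewrite ?filter_uniq ?frob_orbit_uniq // => y.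
rewrite mem_filter; apply/andP/idP => [[eq_yx y_s] | y_orbit].
  by rewrite -(orbit_minpoly_eq period_x (s_period y y_s)).
have y_s := orbit_s y y_orbit.
by rewrite (orbit_minpoly_eq period_x (s_period y y_s)).
Qed.

Lemma frob_period_of_root (h : {poly F}) x : h != 0 -> root (map_poly io h) x ->
  exists e, frob_period e x.
Proof.
move=> h_neq0 root_x; have : ~~ uniq (frob_orbit (size h) x).
  apply: contraFN (ltnn (size h)) => orbit_uniq.
  have := @max_poly_roots _ (map_poly io h) _ _ _ orbit_uniq.
  rewrite size_map size_iota size_map_poly map_poly_eq0; apply=> //.
  by apply/allP => y; apply: root_map_frob_orbit.
rewrite /frob_orbit.
case/(uniqPn 0) => i [j [lt_ij j_lt]]; rewrite size_map size_iota in j_lt.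
rewrite !(nth_map 0%N) ?size_iota ?(ltn_trans lt_ij) // !nth_iota ?(ltn_trans lt_ij) //.
move/(frob_eq_fixed (ltnW lt_ij)); apply: frob_period_exists; lia.
Qed.

Lemma orbit_minpoly_coef0 e x : x != 0 -> frob (2 * e) x = x ->
  (orbit_minpoly e x)`_0 != 0.
Proof.
move=> x_neq0 fix_x; rewrite -(fmorph_eq0 io) -coef_map map_orbit_minpoly //.
rewrite -horner_coef0 -/(root _ 0) root_orbit_poly.
by apply/mapP => -[j _] /esym/eqP; rewrite fmorph_eq0 (negPf x_neq0).
Qed.

Lemma map_conj_recip (f : {poly F}) :
  map_poly io (conj_recip q f) = map_poly (frob 1) (recip (map_poly io f)).
Proof.
have q_gt0 : (0 < q)%N by rewrite expn_gt0 prime_gt0.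
rewrite /conj_recip /conjp -map_recip; apply/polyP => i.
by rewrite !coef_map /= coef_map_id0 ?expr0n ?gtn_eqF // rmorphXn frobE expn1.
Qed.

Lemma conj_recip_monic_size (f : {poly F}) : f`_0 != 0 ->
  conj_recip q f \is monic /\ size (conj_recip q f) = size f.
Proof.
move=> f0_neq0; rewrite -(map_monic io) -(size_map_poly io) map_conj_recip.
rewrite map_monic size_map_poly -(size_map_poly io f).
by apply: recip_monic_size; rewrite coef_map fmorph_eq0.
Qed.

Lemma root_map_conj_recip (f : {poly F}) y : f`_0 != 0 -> y != 0 ->
  root (map_poly io (conj_recip q f)) (frob 1 y) = root (map_poly io f) y^-1.
Proof.
move=> f0_neq0 y_neq0; rewrite map_conj_recip /root horner_map fmorph_eq0.
rewrite horner_recip // coef_map !mulf_eq0 invr_eq0 fmorph_eq0 (negPf f0_neq0).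
by rewrite expf_eq0 (negPf y_neq0) andbF.
Qed.

Section OddDegree.
Variable n : nat.
Hypotheses (n_ge3 : (3 <= n)%N) (n_odd : odd n).

Let n_gt0 : (0 < n)%N. Proof. exact: leq_trans n_ge3. Qed.

Definition scrim_root x := x ^+ (q ^ n + 1) = 1 /\ frob_period n x.

Lemma orbit_minpoly_scrim x : scrim_root x ->
  SCRIM q (orbit_minpoly n x) /\ size (orbit_minpoly n x) = n.+1.
Proof.
case=> /unity_root_frob_inv[x_neq0 inv_x] period_x; have [_ fix_x _] := period_x.
have f0_neq0 := orbit_minpoly_coef0 x_neq0 fix_x.
have [cr_monic size_cr] := conj_recip_monic_size f0_neq0.
have f_monic := orbit_minpoly_monic fix_x.
have size_f := size_orbit_minpoly fix_x.
split=> //; split=> //; last exact: orbit_minpoly_irr.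
apply/eqP; rewrite -eqp_monic // -dvdp_size_eqp ?size_cr // dvdp_orbit_minpoly //.
(* x = y^q, where y^(-1) = x^(q^(3n-1)) lies in the orbit of x as 3n-1 is even. *)
have def_x : frob 1 (frob (2 * n - 1) x) = x by rewrite -frobD subnK ?fix_x ?muln_gt0.
rewrite -[X in root _ X]def_x root_map_conj_recip ?fmorph_eq0 //.
rewrite -frob_inv -inv_x -frobD.
have -> : (n + (2 * n - 1) = 2 * (3 * n./2 + 1))%N.
  by move: (odd_double_half n); rewrite n_odd -muln2; lia.
by apply: root_map_frob2X; rewrite map_orbit_minpoly ?root_orbit_poly_self.
Qed.

Lemma scrim_is_orbit_minpoly (f : {poly F}) : SCRIM q f -> size f = n.+1 ->
  exists2 x, scrim_root x & f = orbit_minpoly n x.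
Proof.
case=> f0_neq0 f_cr f_irr f_monic size_f.
have f_neq0 : f != 0 by rewrite -size_poly_eq0 size_f.
have /closed_rootP[x root_x] : size (map_poly io f) != 1%N.
  by rewrite size_map_poly size_f eqSS -lt0n.
have x_neq0 : x != 0.
  apply: contraNneq f0_neq0 => x0; move: root_x.
  by rewrite x0 /root horner_coef0 coef_map fmorph_eq0.
have [e period_x] := frob_period_of_root f_neq0 root_x.
have [e_gt0 fix_x _] := period_x.
have def_f : f = orbit_minpoly e x.
  apply/eqP; rewrite eq_sym -eqp_monic ?orbit_minpoly_monic //.
  by apply: f_irr.2; rewrite ?dvdp_orbit_minpoly // size_orbit_minpoly // eqSS -lt0n.
have def_e : e = n by move: size_f; rewrite def_f size_orbit_minpoly // => -[].
rewrite def_e in period_x fix_x def_f; exists x => //; split=> //.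
apply/unity_root_frob_inv; split=> //.
(* f = f^dagger puts x^(-q) in the orbit of x, so x^(-1) = x^(q^J) with J odd. *)
have : root (map_poly io f) (frob 1 x^-1).
  by rewrite {1}f_cr root_map_conj_recip ?invr_eq0 ?invrK.
rewrite def_f map_orbit_minpoly // root_orbit_poly => /mapP[j _ def_j].
apply: (frob_period_inv (J := 2 * j + (2 * n - 1))) => //.
  by rewrite (_ : 2 * j + (2 * n - 1) = (2 * (j + n - 1)).+1)%N /= ?oddM //; lia.
by rewrite frobD -def_j -frobD subnKC ?frob_inv ?fix_x // muln_gt0.
Qed.

Lemma inD_prim_root d x : d.-primitive_root x -> inD q n d <-> scrim_root x.
Proof.
move=> prim_x; rewrite /inD (prim_order_dvd prim_x).
split=> [/andP[/eqP x_root not_dvd] | [x_root period_x]].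
  have [x_neq0 inv_x] := iffLR (unity_root_frob_inv n x) x_root; split=> //.
  have [e period_e] := frob_period_exists n_gt0 (frob_double_inv inv_x).
  have [_ _ dvd_e] := period_e; have e_dvd_n := dvd_e _ (frob_double_inv inv_x).
  case: (ltngtP e n) => [lt_en | lt_ne | <- //]; last first.
    by move: (dvdn_leq n_gt0 e_dvd_n); rewrite leqNgt lt_ne.
  have inv_x_e := frob_period_inv period_e n_odd inv_x.
  have /unity_root_frob_inv x_root_e := conj x_neq0 inv_x_e.
  move/forallP: not_dvd => /(_ (Ordinal lt_en)) /=.
  by rewrite (prim_order_dvd prim_x) x_root_e eqxx.
have [_ _ dvd_n] := period_x.
rewrite x_root eqxx /=; apply/forallP => -[a lt_an] /=.
rewrite (prim_order_dvd prim_x); apply/negP => /eqP/unity_root_frob_inv[x_neq0 inv_a].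
(* As n | a, only a = 0 is possible, and then x = x^-1 would be fixed by frob 2. *)
have a0 : a = 0%N.
  case: (posnP a) => // a_gt0.
  by have := dvdn_leq a_gt0 (dvd_n a (frob_double_inv inv_a)); rewrite leqNgt lt_an.
move: inv_a; rewrite a0 frob0 => x_inv.
have /(frob_sqr_eq1 (2 * 1))/dvd_n : x ^+ 2 = 1 by rewrite expr2 {1}x_inv mulVf.
by rewrite dvdn1 => /eqP n1; move: n_ge3; rewrite n1.
Qed.

Lemma inD_natr_neq0 d : inD q n d -> d%:R != 0 :> K.
Proof.
case/andP=> d_dvd _; have coprime_qd := coprime_dvdn_expn_add1 n_gt0 d_dvd.
rewrite -(dvdn_pcharf (rmorph_pchar io pcharF)) -prime_coprime //.
exact: coprime_dvdl (dvdn_exp k_gt0 (dvdnn p)) coprime_qd.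
Qed.

Lemma scrim_has_order (f : {poly F}) : SCRIM q f -> size f = n.+1 ->
  exists2 d, inD q n d & poly_order f d.
Proof.
move=> scrim_f size_f.
have [x [x_root period_x] ->] := scrim_is_orbit_minpoly scrim_f size_f.
have [d prim_x _] := prim_order_exists (ltn_addl _ (ltn0Sn 0)) x_root.
exists d; first exact/(inD_prim_root prim_x).
exact/(poly_order_orbit_minpoly period_x).
Qed.

Lemma scrim_count ds : uniq ds -> all (inD q n) ds ->
  exists N, has_card (fun f : {poly F} =>
      [/\ SCRIM q f, size f = n.+1 & exists2 d, d \in ds & poly_order f d]) N /\
    (N * n = \sum_(d <- ds) totient d)%N.
Proof.
move=> ds_uniq ds_inD.
have ds_neq0 : all (fun d => d%:R != 0 :> K) ds.
  by apply/allP => d /(allP ds_inD)/inD_natr_neq0.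
have [s s_uniq [size_s mem_s]] := closed_prim_roots_seq ds_uniq ds_neq0.
have s_scrim x : x \in s -> exists2 d, d \in ds & d.-primitive_root x /\ scrim_root x.
  rewrite mem_s => /hasP[d d_ds prim_x]; exists d => //; split=> //.
  exact/(inD_prim_root prim_x)/(allP ds_inD).
exists (size (undup (map (orbit_minpoly n) s))); split.
  exists (undup (map (orbit_minpoly n) s)); split=> // [|f]; first exact: undup_uniq.
  rewrite mem_undup; split=> [/mapP[x /s_scrim[d d_ds [prim_x scrim_x]] ->] | ].
    have [scrim_f size_f] := orbit_minpoly_scrim scrim_x.
    by split=> //; exists d => //; apply/poly_order_orbit_minpoly => //; case: scrim_x.
  case=> scrim_f size_f [d d_ds order_f].
  have [x [_ period_x] def_f] := scrim_is_orbit_minpoly scrim_f size_f.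
  apply/mapP; exists x => //; rewrite mem_s; apply/hasP; exists d => //.
  by apply/(poly_order_orbit_minpoly period_x); rewrite -def_f.
(* Each polynomial comes from the n roots of one Frobenius orbit. *)
rewrite -size_s; apply: undup_map_fibers => // x x_s.
apply: count_orbit_minpoly_eq => // [y /s_scrim[_ _ [_ []]] // | y y_orbit].
have [d d_ds [prim_x _]] := s_scrim x x_s.
have coprime_qd : coprime q d.
  by case/andP: (allP ds_inD d d_ds) => /(coprime_dvdn_expn_add1 n_gt0).
by rewrite mem_s; apply/hasP; exists d => //; apply: prim_root_frob_orbit y_orbit.
Qed.

End OddDegree.

End FrobeniusOrbits.

Unset Implicit Arguments.

Theorem mainTheorem10 (F : finFieldType) (q n : nat)
  (hq : prime_power q) (hF : #|F| = (q ^ 2)%N)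
  (hn3 : (3 <= n)%N) (hnodd : odd n) :
  (forall d : nat, inD q n d ->
     exists N : nat,
       has_card (fun f : {poly F} => [/\ SCRIM q f, size f = n.+1 & poly_order f d]) N
       /\ (N%:R : rat) = (totient d)%:R / n%:R)
  /\
  (exists N : nat,
     has_card (fun f : {poly F} => SCRIM q f /\ size f = n.+1) N
     /\ (N%:R : rat) = n%:R^-1 * (\sum_(d <- divisors (q ^ n + 1) | inD q n d) totient d)%N%:R).
Proof.
case: hq => p [k [p_pr k_gt0 def_q]]; subst q.
have [K [io _]] := countable_algebraic_closure F.
have count := scrim_count io p_pr k_gt0 hF hn3 hnodd.
have n_neq0 : (n%:R : rat) != 0 by rewrite pnatr_eq0 -lt0n (leq_trans _ hn3).
split=> [d inD_d | ].
  have inD_ds : all (inD (p ^ k) n) [:: d] by rewrite /= inD_d.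
  have [N [card_N size_N]] := count [:: d] isT inD_ds.
  exists N; split; last by rewrite big_seq1 in size_N; rewrite -size_N natrM mulfK.
  apply: has_card_eq card_N => f; split=> -[scrim_f size_f order_f]; split=> //.
    by case: order_f => d'; rewrite inE => /eqP ->.
  by exists d; rewrite ?inE.
pose ds := [seq d <- divisors ((p ^ k) ^ n + 1) | inD (p ^ k) n d].
have [N [card_N size_N]] := count ds (filter_uniq _ (divisors_uniq _)) (filter_all _ _).
exists N; split.
  apply: has_card_eq card_N => f; split=> [[] // | [scrim_f size_f]].
  have [d inD_d order_f] := scrim_has_order io p_pr k_gt0 hF hn3 hnodd scrim_f size_f.
  split=> //; exists d => //; rewrite mem_filter inD_d -dvdn_divisors ?addn1 //.
  by case/andP: inD_d; rewrite addn1.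
by rewrite /ds big_filter in size_N; rewrite -size_N natrM mulrC mulfK.
Qed.
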